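(* Let $a>0$ and assume that for every $t\in[0,T]$, $(b,\Sigma,F)\in\Theta_t$ implies $b^T\Sigma^{-1}b\le2q_t(1-\log q_t)$. For any $D\in\mathfrak A^D_0$ and $(\Pi,\theta),(\hat\Pi,\hat\theta)\in\mathfrak A^\Pi_0\times\Theta$ with $h_t^{\theta_t}(\Pi_t)\ge h_t^{\hat\theta_t}(\hat\Pi_t)$ for all $t\in[0,T]$, we have $H(\Pi,D,\theta)\ge H(\hat\Pi,D,\hat\theta)$.
   Context: Fix $T>0$, $d\ge1$, $\varepsilon\in(0,2]$. Let $\mathbb{S}^d_+$ be the symmetric positive definite $d\times d$ matrices, $\mathcal L$ the Lévy measures on $\mathbb{R}^d$, with $d^\varepsilon_{\mathcal L}(\mu,\nu)=\sup\int f\,d(\tilde\mu-\tilde\nu)$, $\tilde\mu(A)=\int_A(|z|^{2-\varepsilon}\wedge1)\mu(dz)$, sup over bounded continuous $f$ with $\sup_{z\neq\hat z}[|f(z)|\vee|f(z)-f(\hat z)|/|z-\hat z|^{\varepsilon\wedge1}]\le1$. $\mathcal C\subset\mathbb{R}^d\times\mathbb{S}^d_+\times\mathcal L$ is compact for $d_{\mathcal C}=|y-\hat y|\vee\|M-\hat M\|_2\vee d^\varepsilon_{\mathcal L}(\mu,\hat\mu)$; $\Theta:[0,T]\twoheadrightarrow\mathcal C$ is a weakly measurable correspondence with closed convex values, and $\Theta$ also denotes the set of Borel $\theta:[0,T]\to\mathcal C$ with $\theta_t\in\Theta_t$. Assume $\mathbf S_t=\bigcup_{(y,M,\mu)\in\Theta_t}\mathrm{supp}(\mu)$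 is closed, there is $\kappa_t>0$ with $\{|z|\le\kappa_t^{-1}\}\subseteq\mathrm{Conv}(\mathbf S_t\cup\{0\})\subseteq\{|z|\le\kappa_t\}$, and $|y|\vee\|M\|_2\vee d^\varepsilon_{\mathcal L}(\mu,0)\le\kappa_t$ on $\Theta_t$. CARA setting: $U(x)=-e^{-ax}/a$, $q_t=(T-t+1)^{-1}$; $\mathfrak A^\Pi_0$ = Borel $\Pi:[0,T]\to\mathbb{R}^d$, $\mathfrak A^D_0$ = Borel $D:[0,T]\to\mathbb{R}$. Local kernel $h_t^{(y,M,\mu)}(x)=x^Ty-\frac12aq_tx^TMx+\int(\frac{e^{-aq_tx^Tz}}{-aq_t}+\frac1{aq_t}-x^Tz)\mu(dz)$ for $x\in\mathbb{R}^d$, $(y,M,\mu)\in\Theta_t$. Global kernel $H(\Pi,D,\theta)=\int_0^T\exp\big(\int_0^t-aq_s(h_s^{\theta_s}(\Pi_s)-D_s)ds\big)\big(q_t(h_t^{\theta_t}(\Pi_t)-D_t)+U(D_t)\big)dt$. *)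

From HB Require Import structures.
From mathcomp Require Import all_boot all_order all_algebra.
From mathcomp Require Import all_classical all_reals all_analysis.

Set Implicit Arguments.
Unset Strict Implicit.
Unset Printing Implicit Defensive.

Import Order.TTheory GRing.Theory Num.Theory.
Import numFieldNormedType.Exports.
Local Open Scope classical_set_scope.
Local Open Scope ring_scope.

Section Defs.
Variables (R : realType) (d : nat).

Definition dotv (x y : 'cV[R]_d) : R := (x^T *m y) 0 0.
Definition enorm (x : 'cV[R]_d) : R := Num.sqrt (dotv x x).
Definition eball (z : 'cV[R]_d) (e : R) : set 'cV[R]_d :=
  [set w | enorm (w - z) < e].
Definition eopen (U : set 'cV[R]_d) : Prop :=
  forall z, U z -> exists2 e, 0 < e & eball z e `<=` U.
Definition eclosed (A : set 'cV[R]_d) : Prop :=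
  forall z, (forall e, 0 < e -> exists w, A w /\ enorm (w - z) < e) -> A z.

Definition BVec := g_sigma_algebraType eopen.

Definition spd (M : 'M[R]_d) : Prop :=
  M^T = M /\ forall x : 'cV[R]_d, x != 0 -> 0 < dotv x (M *m x).
Definition opnorm (M : 'M[R]_d) : R :=
  sup [set enorm (M *m x) | x in [set x : 'cV[R]_d | enorm x <= 1]].

Definition levy (mu : {measure set BVec -> \bar R}) : Prop :=
  mu [set (0 : 'cV[R]_d)] = 0%E /\
  (\int[mu]_z (Num.min (enorm z ^+ 2) 1)%:E < +oo)%E.

Definition lweight (eps : R) (z : 'cV[R]_d) : R := Num.min (enorm z `^ (2 - eps)) 1.
Definition econt (f : 'cV[R]_d -> R) : Prop :=
  forall z e, 0 < e -> exists2 del, 0 < del &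
    forall w, enorm (w - z) < del -> `|f w - f z| < e.
Definition dL_test (eps : R) (f : 'cV[R]_d -> R) : Prop :=
  econt f /\ (exists B, forall z, `|f z| <= B) /\
  forall z zh, z != zh ->
    Num.max `|f z| (`|f z - f zh| / enorm (z - zh) `^ Num.min eps 1) <= 1.
Definition dL (eps : R) (mu nu : {measure set BVec -> \bar R}) : R :=
  sup [set fine (\int[mu]_z (f z * lweight eps z)%:E) -
           fine (\int[nu]_z (f z * lweight eps z)%:E) | f in dL_test eps].

Definition Param := ('cV[R]_d * 'M[R]_d * {measure set BVec -> \bar R})%type.
Definition pY (p : Param) := p.1.1.
Definition pM (p : Param) := p.1.2.
Definition pMu (p : Param) := p.2.
Definition dC (eps : R) (p p' : Param) : R :=
  Num.max (Num.max (enorm (pY p - pY p')) (opnorm (pM p - pM p')))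
       (dL eps (pMu p) (pMu p')).
Definition dC_open (eps : R) (U : set Param) : Prop :=
  forall p, U p -> exists2 e, 0 < e & forall p', dC eps p p' < e -> U p'.
Definition dC_compact (eps : R) (C : set Param) : Prop :=
  forall (I : Type) (U : I -> set Param), (forall i, dC_open eps (U i)) ->
    C `<=` \bigcup_i U i ->
    exists F : set I, finite_set F /\ C `<=` \bigcup_(i in F) U i.
Definition dC_closed_in (eps : R) (C A : set Param) : Prop :=
  forall p, C p -> (forall e, 0 < e -> exists p', A p' /\ dC eps p p' < e) -> A p.
Definition param_convex (A : set Param) : Prop :=
  forall p1 p2 (l : R), A p1 -> A p2 -> 0 <= l <= 1 ->
    exists2 p, A p &
      [/\ pY p = l *: pY p1 + (1 - l) *: pY p2,
          pM p = l *: pM p1 + (1 - l) *: pM p2 &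
          forall S, measurable S ->
            pMu p S = (l%:E * pMu p1 S + (1 - l)%:E * pMu p2 S)%E].

Definition supp (mu : {measure set BVec -> \bar R}) : set 'cV[R]_d :=
  [set z | forall e, 0 < e -> (0 < mu (eball z e))%E].
Definition suppS (A : set Param) : set 'cV[R]_d :=
  [set z | exists p, A p /\ supp (pMu p) z].
Definition conv (A : set 'cV[R]_d) : set 'cV[R]_d :=
  [set x | exists n (w : 'I_n -> R) (z : 'I_n -> 'cV[R]_d),
     [/\ forall i, 0 <= w i, \sum_i w i = 1, forall i, A (z i) &
         x = \sum_i w i *: z i]].

Definition standing (T eps : R) (C : set Param) (Theta : R -> set Param)
    (kappa : R -> R) : Prop :=
  [/\ (forall p, C p -> spd (pM p) /\ levy (pMu p)) /\ dC_compact eps C,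
      (* Theta : [0,T] ->> C weakly measurable, closed convex values *)
      (forall t, t \in `[0, T] -> Theta t `<=` C),
      (forall U, dC_open eps U ->
          measurable (`[0, T] `&` [set t | exists p, Theta t p /\ U p])),
      (forall t, t \in `[0, T] ->
          dC_closed_in eps C (Theta t) /\ param_convex (Theta t)) &
      (forall t, t \in `[0, T] ->
         [/\ 0 < kappa t,
             eclosed (suppS (Theta t)),
             [set z | enorm z <= (kappa t)^-1] `<=`
                conv (suppS (Theta t) `|` [set 0]),
             conv (suppS (Theta t) `|` [set 0]) `<=` [set z | enorm z <= kappa t] &
             forall p, Theta t p ->
               Num.max (Num.max (enorm (pY p)) (opnorm (pM p))) (dL eps (pMu p) mzero)
                 <= kappa t])].

Definition Theta_sel (T eps : R) (Theta : R -> set Param) (th : R -> Param) : Prop :=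
  (forall U, dC_open eps U -> measurable (`[0, T] `&` th @^-1` U)) /\
  (forall t, t \in `[0, T] -> Theta t (th t)).

(* admissible strategies: Borel functions on [0,T] *)
Definition adm_Pi (T : R) (Pi : R -> 'cV[R]_d) : Prop :=
  measurable_fun `[0, T] (Pi : R -> BVec).
Definition adm_D (T : R) (D : R -> R) : Prop := measurable_fun `[0, T] D.

Definition qf (T t : R) : R := (T - t + 1)^-1.
Definition Ucara (a x : R) : R := - expR (- (a * x)) / a.

Definition hloc (a T t : R) (p : Param) (x : 'cV[R]_d) : R :=
  let c := a * qf T t in
  dotv x (pY p) - 2^-1 * c * dotv x (pM p *m x) +
  fine (\int[pMu p]_z
          (expR (- (c * dotv x z)) / (- c) + c^-1 - dotv x z)%:E).

Definition Hglob (a T : R) (Pi : R -> 'cV[R]_d) (D : R -> R) (th : R -> Param)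
    : \bar R :=
  (\int[@lebesgue_measure R]_(t in `[0%R, T])
     (expeR (\int[@lebesgue_measure R]_(s in `[0%R, t])
               (- (a * qf T s * (hloc a T s (th s) (Pi s) - D s)))%:E) *
      (qf T t * (hloc a T t (th t) (Pi t) - D t) + Ucara a (D t))%:E))%E.

End Defs.

From HB Require Import structures.
From mathcomp Require Import all_boot all_order all_algebra.
From mathcomp Require Import all_classical all_reals all_analysis.
From mathcomp Require Import ring lra.
Import Order.TTheory GRing.Theory Num.Theory.
Local Open Scope classical_set_scope.
Local Open Scope ring_scope.

(* Write [c = q (h - D) + U(D)] for the running integrand of [H] and [E] for
   the exponential discount.  Completing the square in the Gaussian part and
   [e^u >= 1 + u] in the jump part give [h <= (1 - ln q) / a] under the bound
   on [b^T Sigma^-1 b]; since [max_D (U(D) - q D) = - q (1 - ln q) / a], this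
   forces [c <= 0].  A larger local kernel makes [c] larger and [E] smaller,
   and for a nonpositive [c] both changes increase [E c]. *)

Section integral_monotonicity.
Context (dT : measure_display) (T : measurableType dT) (R : realType).
Variables (mu : {measure set T -> \bar R}) (A : set T).
Implicit Types f g : T -> \bar R.

(* No measurability is needed: the integral of an arbitrary function is built
   from suprema over the simple functions below its positive and negative
   parts. *)
Lemma ge0_le_integral_nomeas f g :
  (forall x, A x -> (0 <= f x)%E) -> (forall x, A x -> (f x <= g x)%E) ->
  (\int[mu]_(x in A) f x <= \int[mu]_(x in A) g x)%E.
Proof.
move=> f0 fg.
have g0 x : A x -> (0 <= g x)%E by move=> Ax; exact: le_trans (f0 x Ax) (fg x Ax).
rewrite (ge0_integralE _ f0) (ge0_integralE _ g0).
apply: ereal_sup_le => _ [h hf <-]; exists h => //= x.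
apply: le_trans (hf x) _; rewrite /patch; case: ifP => // /[!inE].
exact: fg.
Qed.

Lemma le_integral_nomeas f g : (forall x, A x -> (f x <= g x)%E) ->
  (\int[mu]_(x in A) f x <= \int[mu]_(x in A) g x)%E.
Proof.
move=> fg; rewrite (integralE _ _ f) (integralE _ _ g).
have fgA : {in A, forall x, (f x <= g x)%E} by move=> x /[!inE]; exact: fg.
apply: leeB; apply: ge0_le_integral_nomeas => x Ax.
- exact: funepos_ge0.
- by apply: (funepos_le fgA); rewrite inE.
- exact: funeneg_ge0.
- by apply: (funeneg_le fgA); rewrite inE.
Qed.

End integral_monotonicity.

Section dotv_theory.
Context {R : realType} {d : nat}.
Implicit Types (u v w x y : 'cV[R]_d) (M : 'M[R]_d).

Lemma dotvDl u v w : dotv (u + v) w = dotv u w + dotv v w.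
Proof. by rewrite /dotv linearD /= mulmxDl mxE. Qed.

Lemma dotvNl u w : dotv (- u) w = - dotv u w.
Proof. by rewrite /dotv linearN /= mulNmx mxE. Qed.

Lemma dotvZl (k : R) u w : dotv (k *: u) w = k * dotv u w.
Proof. by rewrite /dotv linearZ /= -scalemxAl mxE. Qed.

Lemma dotvC u v : dotv u v = dotv v u.
Proof.
by rewrite /dotv -[in LHS](trmxK (u^T *m v)) trmx_mul trmxK [in LHS]mxE.
Qed.

Lemma dotvDr u v w : dotv w (u + v) = dotv w u + dotv w v.
Proof. by rewrite dotvC dotvDl !(dotvC w). Qed.

Lemma dotvNr u w : dotv w (- u) = - dotv w u.
Proof. by rewrite dotvC dotvNl dotvC. Qed.

Lemma dotvZr (k : R) u w : dotv w (k *: u) = k * dotv w u.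
Proof. by rewrite dotvC dotvZl dotvC. Qed.

Lemma dotv0r w : dotv w 0 = 0.
Proof. by rewrite /dotv mulmx0 mxE. Qed.

Lemma dotv_mulmx_sym M u v : M^T = M -> dotv u (M *m v) = dotv v (M *m u).
Proof. by move=> MT; rewrite dotvC /dotv trmx_mul MT mulmxA. Qed.

Lemma spd_quad_ge0 M v : spd M -> 0 <= dotv v (M *m v).
Proof.
case=> _ Mpos; have [->|v0] := eqVneq v 0; first by rewrite mulmx0 dotv0r.
exact/ltW/Mpos.
Qed.

Lemma spd_unitmx M : spd M -> M \in unitmx.
Proof.
case=> MT Mpos; rewrite unitmxE unitfE; apply/negP => /det0P [v v0 vM].
have vT0 : v^T != 0 by rewrite trmx_eq0.
have := Mpos _ vT0.
have -> : M *m v^T = 0 by rewrite -{1}MT -trmx_mul vM trmx0.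
by rewrite dotv0r ltxx.
Qed.

(* Completing the square around the maximiser [x = M^-1 y / c]. *)
Lemma spd_linear_sub_quad_le M x y (c : R) : spd M -> 0 < c ->
  dotv x y - 2^-1 * c * dotv x (M *m x) <= dotv y (invmx M *m y) / (2 * c).
Proof.
move=> spdM c0; have [MT _] := spdM.
set w := invmx M *m y; set v := c *: x - w.
have Mw : M *m w = y by rewrite /w mulKVmx ?spd_unitmx.
have square : dotv v (M *m v) =
    c ^+ 2 * dotv x (M *m x) - 2 * c * dotv x y + dotv y w.
  rewrite /v mulmxBr -scalemxAr Mw dotvDl dotvNl !dotvDr !dotvNr !dotvZl !dotvZr.
  rewrite (dotv_mulmx_sym _ w x MT) Mw (dotvC w y); ring.
rewrite -subr_ge0.
have -> : dotv y w / (2 * c) - (dotv x y - 2^-1 * c * dotv x (M *m x)) =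
    dotv v (M *m v) / (2 * c) by rewrite square; field; rewrite gt_eqF.
by rewrite divr_ge0 ?spd_quad_ge0 // mulr_ge0 // ltW.
Qed.

End dotv_theory.

Lemma qf_gt0 {R : realType} {T t : R} : t <= T -> 0 < qf T t.
Proof. by move=> tT; rewrite /qf invr_gt0; lra. Qed.

Lemma expR_compensated_le0 {R : realType} (c u : R) : 0 < c ->
  expR (- (c * u)) / - c + c^-1 - u <= 0.
Proof.
move=> c0.
have -> : expR (- (c * u)) / - c + c^-1 - u =
    - ((expR (- (c * u)) - (1 + - (c * u))) / c) by field; rewrite gt_eqF.
by rewrite oppr_le0 divr_ge0 ?subr_ge0 ?expR_ge1Dx // ltW.
Qed.

Section cara_kernel.
Context {R : realType} {d : nat} {a T : R}.
Hypothesis a_gt0 : 0 < a.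

Lemma hloc_le_quad t (p : Param R d) x : t <= T ->
  hloc a T t p x <= dotv x (pY p) - 2^-1 * (a * qf T t) * dotv x (pM p *m x).
Proof.
move=> tT; rewrite /hloc /= gerDl; apply: fine_le0.
apply: (@le_trans _ _ (\int[pMu p]_z (cst 0%E z))%E); last by rewrite integral0.
apply: le_integral_nomeas => z _.
by rewrite lee_fin expR_compensated_le0 // mulr_gt0 ?qf_gt0.
Qed.

Lemma hloc_le_entropy t (p : Param R d) x : t <= T -> spd (pM p) ->
  dotv (pY p) (invmx (pM p) *m pY p) <= 2 * qf T t * (1 - ln (qf T t)) ->
  hloc a T t p x <= (1 - ln (qf T t)) / a.
Proof.
move=> tT spdM hy; have q0 := qf_gt0 tT.
apply: le_trans (hloc_le_quad _ p x tT) _.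
apply: le_trans (spd_linear_sub_quad_le _ x _ _ spdM (mulr_gt0 a_gt0 q0)) _.
have -> : (1 - ln (qf T t)) / a =
    2 * qf T t * (1 - ln (qf T t)) / (2 * (a * qf T t)).
  by field; rewrite !gt_eqF.
by rewrite ler_pM2r // invr_gt0 !mulr_gt0.
Qed.

(* The maximum is attained where [e^{-a D} = q]. *)
Lemma Ucara_sub_le (q D : R) : 0 < q ->
  Ucara a D - q * D <= - (q * (1 - ln q) / a).
Proof.
move=> q0; set u := - (a * D) - ln q.
have expu : q * expR u = expR (- (a * D)).
  by rewrite -[in RHS](subrK (ln q) (- (a * D))) [in RHS]expRD lnK ?posrE // mulrC.
have := expR_ge1Dx u; rewrite -(ler_pM2l q0) expu => le_u.
rewrite /Ucara -subr_ge0.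
have -> : - (q * (1 - ln q) / a) - (- expR (- (a * D)) / a - q * D) =
    (expR (- (a * D)) - q * (1 + u)) / a by rewrite /u; field; rewrite gt_eqF.
by rewrite divr_ge0 ?subr_ge0 // ltW.
Qed.

Lemma cara_integrand_le0 (q h D : R) : 0 < q ->
  h <= (1 - ln q) / a -> q * (h - D) + Ucara a D <= 0.
Proof.
move=> q0 hle; apply: le_trans (_ : _ <= q * ((1 - ln q) / a - D) + Ucara a D) _.
  by rewrite lerD2r ler_pM2l // lerD2r.
have := Ucara_sub_le _ D q0; rewrite mulrBr; lra.
Qed.

End cara_kernel.

Lemma lee_mul_npos_weight (R : realType) (e1 e2 : \bar R) (c1 c2 : R) :
  (0 <= e1)%E -> (e1 <= e2)%E -> c2 <= c1 -> c1 <= 0 ->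
  (e2 * c2%:E <= e1 * c1%:E)%E.
Proof.
move=> e10 e12 c21 c10; rewrite -leeN2 -!muleN -!EFinN.
by apply: lee_pmul => //; rewrite lee_fin ?oppr_ge0 ?lerN2.
Qed.

Theorem theorem5p5 (R : realType) (d : nat) (T eps : R)
    (C : set (Param R d)) (Theta : R -> set (Param R d)) (kappa : R -> R)
    (a : R) :
  (0 < d)%N -> 0 < T -> 0 < eps <= 2 ->
  standing T eps C Theta kappa ->
  0 < a ->
  (forall t, t \in `[0, T] -> forall p, Theta t p ->
     dotv (pY p) (invmx (pM p) *m pY p) <= 2 * qf T t * (1 - ln (qf T t))) ->
  forall (D : R -> R) (Pi Pih : R -> 'cV[R]_d) (th thh : R -> Param R d),
    adm_D T D ->
    adm_Pi T Pi -> Theta_sel T eps Theta th ->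
    adm_Pi T Pih -> Theta_sel T eps Theta thh ->
    (forall t, t \in `[0, T] ->
       hloc a T t (thh t) (Pih t) <= hloc a T t (th t) (Pi t)) ->
    (Hglob a T Pih D thh <= Hglob a T Pi D th)%E.
Proof.
move=> _ _ _ [[CP _] ThC _ _ _] a0 hyp D Pi Pih th thh _ _ [_ thS] _ _ hle.
apply: le_integral_nomeas => t /= tin.
have := tin; rewrite in_itv /= => /andP[_ tT].
have spdM : spd (pM (th t)) := (CP _ (ThC t tin _ (thS t tin))).1.
have hbound := hloc_le_entropy a0 _ _ (Pi t) tT spdM (hyp t tin _ (thS t tin)).
apply: lee_mul_npos_weight.
- exact: expeR_ge0.
- rewrite lee_expeR; apply: le_integral_nomeas => s /=.
  rewrite !in_itv /= => /andP[s0 st]; have sT := le_trans st tT.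
  rewrite lee_fin lerN2 ler_pM2l ?mulr_gt0 ?qf_gt0 // lerD2r.
  by apply: hle; rewrite in_itv /= s0.
- by rewrite lerD2r ler_pM2l ?qf_gt0 // lerD2r; exact: hle.
- exact: cara_integrand_le0 a0 _ _ _ (qf_gt0 tT) hbound.
Qed.
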